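(* Let $0<s\le1$ and let $\beta\in(1,2)$ be such that the $\beta$-expansion of $1$ terminates; fix $m\in\mathbb N$, $\bar p\in[0,1]^{2^m}$ and $\epsilon>0$. Let $Q(s,\beta)=\beta^{-s}\sum_{i=0}^\infty(1-\beta^{-1})^{is}$. Suppose there are a strictly increasing sequence $(M_k)$ of natural numbers and $0\le c<1$ such that \[ N^s_\infty\big([0,1)\cap G^{\beta,m}_{\bar p}(M_k,\epsilon)\big)<\frac{c}{2Q(s,\beta)}\quad\text{for all }k. \] Then for each cylinder $C$ of $f_\beta$ there is $K_C$ such that $N^s_\infty\big(C\cap G^{\beta,m}_{\bar p}(M_k,\epsilon/2)\big)<c|C|^s$ for all $k>K_C$.
   Context: For $\beta\in(1,2)$ let $f_\beta(x)=\beta x \bmod 1$ on $[0,1)$ and $d_n(x,\beta)=\lfloor \beta f_\beta^n(x)\rfloor$, $n\ge0$; $(x_n)_{n\ge0}=(d_n(x,\beta))_{n\ge0}\in\{0,1\}^{\mathbb N}$ is the $\beta$-expansion of $x$. The expansion of $1$ terminates if $d(1,\beta)=j_0\dots j_{k-1}0^\infty$. A cylinder of generation $n$ is a nonempty set $[i_0\cdots i_{n-1}]=\{x\in[0,1): d_k(x,\beta)=i_k,\ 0\le k<n\}$. For a word $w$ of length $m$ and $n>m$, $\tau^\beta_w(x,n)=\#\{i\in\{0,\dots,n-m-1\}: x_i\dots x_{i+m-1}=w\}$; enumerating binary words of length $m$ as $w_1,\dots,w_{2^m}$, $G^{\beta,m}_{\bar p}(n,\epsilon)=\{x\in[0,1):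 p_{w_j}-\epsilon<\tau^\beta_{w_j}(x,n)/(n-m)<p_{w_j}+\epsilon,\ j=1,\dots,2^m\}$. $N^s_\infty(F)=\inf\{\sum_i|C_i|^s: F\subset\bigcup_iC_i\}$, the infimum over countable covers by cylinders of $f_\beta$. *)

From Stdlib Require Import Reals Lra Lia ZArith Arith List Classical ClassicalEpsilon.
Open Scope R_scope.

Definition fbeta (beta x : R) : R := frac_part (beta * x).

Definition fiter (beta : R) (n : nat) (x : R) : R := Nat.iter n (fbeta beta) x.

Definition digit (beta : R) (n : nat) (x : R) : Z := Int_part (beta * fiter beta n x).

Definition expansion_of_one_terminates (beta : R) : Prop :=
  exists k : nat, forall n : nat, (k <= n)%nat -> digit beta n 1 = 0%Z.

Definition cyl_set (beta : R) (w : list Z) (x : R) : Prop :=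
  0 <= x < 1 /\ forall k : nat, (k < length w)%nat -> digit beta k x = nth k w 0%Z.

Definition is_cyl_word (beta : R) (w : list Z) : Prop := exists x, cyl_set beta w x.

Definition is_cylinder (beta : R) (C : R -> Prop) : Prop :=
  exists w : list Z, is_cyl_word beta w /\ forall x, C x <-> cyl_set beta w x.

(* supremum / infimum of a set of reals (meaningful when they exist) *)
Definition Rsup (E : R -> Prop) : R := epsilon (inhabits 0) (fun l => is_lub E l).

Definition is_lower_bound (E : R -> Prop) (m : R) : Prop := forall x, E x -> m <= x.
Definition is_glb (E : R -> Prop) (m : R) : Prop :=
  is_lower_bound E m /\ forall b, is_lower_bound E b -> b <= m.
Definition Rinf (E : R -> Prop) : R := epsilon (inhabits 0) (fun l => is_glb E l).

Definition diam (C : R -> Prop) : R :=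
  Rsup (fun d => exists x y, C x /\ C y /\ d = Rabs (x - y)).

(* d^s, with the convention 0^s = 0 *)
Definition pow_s (s d : R) : R := if Rlt_dec 0 d then Rpower d s else 0.

(* cost of a cover element: None = no set (allows finite covers) *)
Definition cover_cost (beta s : R) (o : option (list Z)) : R :=
  match o with
  | None => 0
  | Some w => pow_s s (diam (cyl_set beta w))
  end.

Definition cover_value (beta s : R) (F : R -> Prop) (t : R) : Prop :=
  exists W : nat -> option (list Z),
    (forall i w, W i = Some w -> is_cyl_word beta w) /\
    (forall x, F x -> exists i w, W i = Some w /\ cyl_set beta w x) /\
    infinite_sum (fun i => cover_cost beta s (W i)) t.

Definition Ninf (beta s : R) (F : R -> Prop) : R := Rinf (cover_value beta s F).

Definition Qsb (s beta : R) : R :=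
  Rpower beta (- s) *
  epsilon (inhabits 0)
    (fun l => infinite_sum (fun i => Rpower (1 - / beta) (INR i * s)) l).

Definition binary_word (m : nat) (w : list Z) : Prop :=
  length w = m /\ Forall (fun a => a = 0%Z \/ a = 1%Z) w.

Definition occurs_at (beta x : R) (w : list Z) (i : nat) : bool :=
  forallb (fun j => Z.eqb (digit beta (i + j) x) (nth j w 0%Z)) (seq 0 (length w)).

Definition tau (beta : R) (w : list Z) (x : R) (n : nat) : nat :=
  length (filter (occurs_at beta x w) (seq 0 (n - length w))).

(* G^{beta,m}_{pbar}(n, eps); pbar is indexed by binary words of length m *)
Definition Gset (beta : R) (m : nat) (pbar : list Z -> R) (n : nat) (eps : R)
  (x : R) : Prop :=
  0 <= x < 1 /\
  forall w, binary_word m w ->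
    pbar w - eps < INR (tau beta w x n) / (INR n - INR m) < pbar w + eps.

From Stdlib Require Import Reals.
From Stdlib Require Import Lra Lia ZArith Arith List Classical ClassicalEpsilon.
From Stdlib Require Import FunctionalExtensionality PropExtensionality.
Open Scope R_scope.

(* Let C = [w] be a cylinder.  Choose N >= |w| maximal such that all points of C
   share their first N digits (N exists because the digits of two distinct
   points of C cannot agree forever), and let v be this common prefix. *)

Lemma Int_part_unique r (z : Z) : IZR z <= r < IZR z + 1 -> Int_part r = z.
Proof.
  intros [H1 H2]. unfold Int_part.
  assert (z + 1 = up r)%Z by (apply tech_up; rewrite plus_IZR; simpl; lra).
  lia.
Qed.

Lemma Int_part_nonneg r : 0 <= r -> (0 <= Int_part r)%Z.
Proof.
  intros H. destruct (base_Int_part r) as [_ H2].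
  assert (Hgt : IZR (Int_part r) > -1) by lra.
  apply lt_IZR in Hgt. lia.
Qed.

Lemma fiter_S beta n x :
  fiter beta (S n) x = beta * fiter beta n x - IZR (digit beta n x).
Proof. reflexivity. Qed.

Lemma fiter_range beta n x : 0 <= x < 1 -> 0 <= fiter beta n x < 1.
Proof.
  intros H. destruct n as [|n]; [exact H|].
  change (fiter beta (S n) x) with (frac_part (beta * fiter beta n x)).
  destruct (base_fp (beta * fiter beta n x)). lra.
Qed.

Lemma fiter_add beta a b x : fiter beta (a + b) x = fiter beta a (fiter beta b x).
Proof. unfold fiter. apply Nat.iter_add. Qed.

Lemma digit_shift beta N k x : digit beta k (fiter beta N x) = digit beta (N + k) x.
Proof. unfold digit. rewrite Nat.add_comm, fiter_add. reflexivity. Qed.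

Lemma digit_nonneg beta n x : 0 < beta -> 0 <= x < 1 -> (0 <= digit beta n x)%Z.
Proof.
  intros Hb Hx. unfold digit. apply Int_part_nonneg.
  pose proof (fiter_range beta n x Hx). nra.
Qed.

Lemma digit_spec beta n x :
  IZR (digit beta n x) <= beta * fiter beta n x < IZR (digit beta n x) + 1.
Proof. unfold digit. destruct (base_Int_part (beta * fiter beta n x)). lra. Qed.

Lemma fiter_diff beta N u u' :
  (forall k, (k < N)%nat -> digit beta k u = digit beta k u') ->
  fiter beta N u - fiter beta N u' = beta ^ N * (u - u').
Proof.
  induction N as [|N IHN]; intros H; [simpl; ring|].
  rewrite !fiter_S, (H N) by lia.
  assert (E : fiter beta N u - fiter beta N u' = beta ^ N * (u - u'))
    by (apply IHN; intros; apply H; lia).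
  simpl. nra.
Qed.

Lemma common_prefix_close beta N x y : 0 <= x < 1 -> 0 <= y < 1 ->
  (forall k, (k < N)%nat -> digit beta k x = digit beta k y) ->
  beta ^ N * (x - y) < 1.
Proof.
  intros Hx Hy Hd. rewrite <- (fiter_diff beta N x y Hd).
  pose proof (fiter_range beta N x Hx). pose proof (fiter_range beta N y Hy). lra.
Qed.

Lemma shift_up_keeps_digits beta N x : 1 < beta -> 0 <= x < 1 ->
  exists delta, 0 < delta /\ forall t, 0 <= t < delta ->
    0 <= x + t < 1 /\ (forall k, (k < N)%nat -> digit beta k (x + t) = digit beta k x)
    /\ fiter beta N (x + t) = fiter beta N x + beta ^ N * t.
Proof.
  intros Hb Hx. induction N as [|N IHN].
  - exists (1 - x). split; [lra|]. intros t Ht.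
    split; [lra|]. split; [intros; lia|]. simpl. ring.
  - destruct IHN as [d [Hd Hi]].
    set (y := fiter beta N x).
    pose proof (digit_spec beta N x) as Hs. fold y in Hs.
    assert (Hp : 0 < beta ^ S N) by (apply pow_lt; lra).
    set (room := (IZR (digit beta N x) + 1 - beta * y) / beta ^ S N).
    assert (Hroom : 0 < room) by (apply Rdiv_lt_0_compat; lra).
    exists (Rmin d room). split; [now apply Rmin_pos|].
    intros t Ht.
    pose proof (Rmin_l d room). pose proof (Rmin_r d room).
    destruct (Hi t ltac:(lra)) as [Hr [Hdg Hf]].
    assert (Htr : t < room) by lra.
    assert (Hb2 : beta ^ S N * t < IZR (digit beta N x) + 1 - beta * y).
    { apply (Rmult_lt_compat_l (beta ^ S N)) in Htr; [|lra].
      unfold room in Htr. field_simplify in Htr; lra. }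
    assert (HdN : digit beta N (x + t) = digit beta N x).
    { unfold digit at 1. rewrite Hf. apply Int_part_unique. fold y.
      assert (beta * (y + beta ^ N * t) = beta * y + beta ^ S N * t) by (simpl; ring).
      assert (0 <= beta ^ S N * t) by nra.
      split; lra. }
    split; [exact Hr|]. split.
    + intros k Hk. destruct (Nat.eq_dec k N); [subst; exact HdN|]. apply Hdg. lia.
    + rewrite !fiter_S, HdN, Hf. simpl. ring.
Qed.

Lemma shift_down_keeps_digits beta N x t : 1 < beta -> 0 <= x < 1 ->
  0 <= t -> beta ^ N * t <= fiter beta N x ->
    0 <= x - t < 1 /\ (forall k, (k < N)%nat -> digit beta k (x - t) = digit beta k x)
    /\ fiter beta N (x - t) = fiter beta N x - beta ^ N * t.
Proof.
  intros Hb Hx Ht. induction N as [|N IHN]; intros HtN.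
  - simpl in *. split; [lra|]. split; [intros; lia|]. ring.
  - set (y := fiter beta N x).
    pose proof (digit_spec beta N x) as Hs. fold y in Hs.
    pose proof (digit_nonneg beta N x ltac:(lra) Hx) as Hd0. apply IZR_le in Hd0.
    rewrite fiter_S in HtN. fold y in HtN. simpl in HtN.
    assert (Hp : 0 < beta ^ N) by (apply pow_lt; lra).
    assert (HtN' : beta ^ N * t <= y).
    { apply (Rmult_le_reg_l beta); [lra|]. rewrite <- Rmult_assoc. lra. }
    destruct (IHN HtN') as [Hr [Hdg Hf]].
    assert (HdN : digit beta N (x - t) = digit beta N x).
    { unfold digit at 1. rewrite Hf. apply Int_part_unique. fold y.
      assert (0 <= beta * beta ^ N * t) by (apply Rmult_le_pos; nra).
      split; nra. }
    split; [exact Hr|]. split.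
    + intros k Hk. destruct (Nat.eq_dec k N); [subst; exact HdN|]. apply Hdg. lia.
    + rewrite !fiter_S, HdN, Hf. simpl. ring.
Qed.

Definition dist_set (C : R -> Prop) (d : R) : Prop :=
  exists x y, C x /\ C y /\ d = Rabs (x - y).

Lemma diam_lub (C : R -> Prop) : (exists x, C x) -> (forall x, C x -> 0 <= x < 1) ->
  is_lub (dist_set C) (diam C).
Proof.
  intros [x0 Hx0] HC. unfold diam, Rsup. apply epsilon_spec.
  destruct (completeness (dist_set C)) as [l Hl].
  - exists 1. intros d [x [y [Hx [Hy ->]]]]. apply HC in Hx. apply HC in Hy.
    unfold Rabs; destruct Rcase_abs; lra.
  - exists 0, x0, x0. repeat split; auto. rewrite Rminus_diag, Rabs_R0. reflexivity.
  - exists l. exact Hl.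
Qed.

Lemma diam_ge (C : R -> Prop) x y : (forall x, C x -> 0 <= x < 1) -> C x -> C y ->
  Rabs (x - y) <= diam C.
Proof.
  intros HC Hx Hy. apply (diam_lub C (ex_intro _ x Hx) HC). exists x, y. auto.
Qed.

Lemma diam_le (C : R -> Prop) b : (exists x, C x) -> (forall x, C x -> 0 <= x < 1) ->
  (forall x y, C x -> C y -> Rabs (x - y) <= b) -> diam C <= b.
Proof.
  intros Hne HC Hb. apply (diam_lub C Hne HC). intros d [x [y [Hx [Hy ->]]]]. auto.
Qed.

Lemma cyl_range beta w x : cyl_set beta w x -> 0 <= x < 1.
Proof. intros [H _]. exact H. Qed.

Lemma cyl_prefix_closed beta w N x y : (length w <= N)%nat -> cyl_set beta w x ->
  0 <= y < 1 -> (forall k, (k < N)%nat -> digit beta k y = digit beta k x) ->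
  cyl_set beta w y.
Proof.
  intros HwN [_ Hx] Hy Hd. split; [exact Hy|]. intros k Hk.
  rewrite Hd by lia. apply Hx, Hk.
Qed.

Definition shares_prefix (beta : R) (w : list Z) (N : nat) : Prop :=
  forall x x', cyl_set beta w x -> cyl_set beta w x' ->
    forall k, (k < N)%nat -> digit beta k x = digit beta k x'.

Lemma cylinder_two_points beta w x : 1 < beta -> cyl_set beta w x ->
  exists t, 0 < t /\ cyl_set beta w (x + t).
Proof.
  intros Hb Hx.
  destruct (shift_up_keeps_digits beta (length w) x Hb (cyl_range _ _ _ Hx))
    as [d [Hd Hup]].
  destruct (Hup (d / 2) ltac:(lra)) as [Hr [Hdg _]].
  exists (d / 2). split; [lra|].
  apply (cyl_prefix_closed beta w (length w) x); auto.
Qed.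

Lemma last_true_index (P : nat -> Prop) n j : P n -> ~ P (n + j)%nat ->
  exists N, (n <= N)%nat /\ P N /\ ~ P (S N).
Proof.
  intros Hn. induction j as [|j IH]; intros Hj.
  - rewrite Nat.add_0_r in Hj. contradiction.
  - destruct (classic (P (n + j)%nat)) as [H|H].
    + exists (n + j)%nat. split; [lia|]. split; [exact H|]. rewrite <- Nat.add_succ_r. exact Hj.
    + exact (IH H).
Qed.

(* Since beta^N grows without bound, the common prefix of [w] is finite: there
   is a maximal N >= |w| such that [w] shares its first N digits. *)
Lemma maximal_common_prefix beta w : 1 < beta -> is_cyl_word beta w ->
  exists N, (length w <= N)%nat /\ shares_prefix beta w N /\ ~ shares_prefix beta w (S N).
Proof.
  intros Hb [x Hx].
  destruct (cylinder_two_points beta w x Hb Hx) as [t [Ht Hxt]].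
  destruct (Pow_x_infinity beta ltac:(rewrite Rabs_right; lra) (/ t)) as [B HB].
  apply last_true_index with (j := B).
  - intros y y' [_ Hy] [_ Hy'] k Hk. rewrite Hy, Hy'; auto.
  - intros HP. specialize (HB (length w + B)%nat ltac:(lia)).
    rewrite Rabs_right in HB by (left; apply pow_lt; lra).
    assert (Hclose : beta ^ (length w + B) * ((x + t) - x) < 1)
      by (apply common_prefix_close; try eapply cyl_range; eauto).
    replace ((x + t) - x) with t in Hclose by ring.
    assert (Hle : / t * t <= beta ^ (length w + B) * t) by (apply Rmult_le_compat_r; lra).
    rewrite Rinv_l in Hle by lra. lra.
Qed.

Lemma point_with_positive_digit beta w N : 1 < beta ->
  shares_prefix beta w N -> ~ shares_prefix beta w (S N) ->
  exists xa, cyl_set beta w xa /\ 1 <= beta * fiter beta N xa.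
Proof.
  intros Hb HN HSN. apply NNPP. intros Hno. apply HSN.
  assert (Hzero : forall y, cyl_set beta w y -> digit beta N y = 0%Z).
  { intros y Hy. pose proof (digit_nonneg beta N y ltac:(lra) (cyl_range _ _ _ Hy)).
    destruct (Z.eq_dec (digit beta N y) 0) as [|Hne]; [assumption|].
    exfalso. apply Hno. exists y. split; [exact Hy|].
    pose proof (digit_spec beta N y).
    assert (1 <= IZR (digit beta N y)) by (apply IZR_le; lia). lra. }
  intros x x' Hx Hx' k Hk.
  destruct (Nat.lt_ge_cases k N); [now apply HN|].
  replace k with N by lia. rewrite !Hzero; auto.
Qed.

(* If a point of [w] has digit >= 1 at position N >= |w|, moving it to the left
   end of its generation-(N+1) cylinder stays in [w]; hence |[w]| >= beta^-(N+1). *)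
Lemma cylinder_diam_lower beta w N xa : 1 < beta -> (length w <= N)%nat ->
  cyl_set beta w xa -> 1 <= beta * fiter beta N xa ->
  / beta ^ S N <= diam (cyl_set beta w).
Proof.
  intros Hb HwN Hxa Hdig.
  assert (HbN : 0 < beta ^ N) by (apply pow_lt; lra).
  pose proof (fiter_range beta N xa (cyl_range _ _ _ Hxa)) as Hf.
  set (t := fiter beta N xa / beta ^ N).
  assert (Ht0 : 0 <= t) by (apply Rmult_le_pos; [lra|left; apply Rinv_0_lt_compat; lra]).
  assert (Htf : beta ^ N * t = fiter beta N xa) by (unfold t; field; lra).
  destruct (shift_down_keeps_digits beta N xa t Hb (cyl_range _ _ _ Hxa) Ht0
              ltac:(lra)) as [Hr [Hd _]].
  assert (Hin : cyl_set beta w (xa - t)) by (eapply cyl_prefix_closed; eauto).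
  eapply Rle_trans; [|apply (diam_ge _ xa (xa - t) (cyl_range beta w) Hxa Hin)].
  replace (xa - (xa - t)) with t by ring. rewrite Rabs_right by lra.
  unfold t. simpl. rewrite Rinv_mult.
  apply (Rmult_le_reg_l (beta * beta ^ N)); [nra|].
  field_simplify; lra.
Qed.

Lemma cylinder_depth beta w : 1 < beta -> is_cyl_word beta w ->
  exists N xa, cyl_set beta w xa /\
    (forall x, cyl_set beta w x -> forall k, (k < N)%nat -> digit beta k x = digit beta k xa) /\
    / beta ^ S N <= diam (cyl_set beta w).
Proof.
  intros Hb Hw.
  destruct (maximal_common_prefix beta w Hb Hw) as [N [HwN [HN HSN]]].
  destruct (point_with_positive_digit beta w N Hb HN HSN) as [xa [Hxa Hdig]].
  exists N, xa. split; [exact Hxa|]. split.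
  - intros x Hx k Hk. exact (HN x xa Hx Hxa k Hk).
  - exact (cylinder_diam_lower beta w N xa Hb HwN Hxa Hdig).
Qed.

Lemma glb_exists (E : R -> Prop) : (exists x, E x) -> (forall x, E x -> 0 <= x) ->
  is_glb E (Rinf E).
Proof.
  intros [x0 Hx0] Hpos. unfold Rinf. apply epsilon_spec.
  destruct (completeness (fun y => E (- y))) as [l [Hl1 Hl2]].
  - exists 0. intros y Hy. apply Hpos in Hy. lra.
  - exists (- x0). rewrite Ropp_involutive. exact Hx0.
  - exists (- l). split.
    + intros x Hx. assert (- x <= l) by (apply Hl1; rewrite Ropp_involutive; exact Hx). lra.
    + intros b Hb. assert (l <= - b) by (apply Hl2; intros y Hy; apply Hb in Hy; lra). lra.
Qed.

Lemma pow_s_nonneg s d : 0 <= pow_s s d.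
Proof. unfold pow_s. destruct Rlt_dec; [left; apply exp_pos|lra]. Qed.

Lemma cover_cost_nonneg beta s o : 0 <= cover_cost beta s o.
Proof. destruct o; simpl; [apply pow_s_nonneg|lra]. Qed.

Lemma infinite_sum_nonneg f l : (forall i, 0 <= f i) -> infinite_sum f l -> 0 <= l.
Proof.
  intros Hf Hl. apply Rle_cv_lim with (Un := fun _ => 0) (Vn := sum_f_R0 f); [| |exact Hl].
  - intros n. apply cond_pos_sum, Hf.
  - intros e He. exists 0%nat. intros. unfold R_dist. rewrite Rminus_diag, Rabs_R0. lra.
Qed.

Lemma series_le_scaled (a b : nat -> R) lam B : 0 <= lam ->
  (forall i, 0 <= a i <= lam * b i) -> infinite_sum b B ->
  exists A, infinite_sum a A /\ A <= lam * B.
Proof.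
  intros Hlam Hab HB.
  assert (HlB : Un_cv (fun n => sum_f_R0 (fun i => lam * b i) n) (lam * B)).
  { replace (fun n => sum_f_R0 (fun i => lam * b i) n)
      with (fun n => lam * sum_f_R0 b n)
      by (apply functional_extensionality; intros n; rewrite scal_sum;
          apply sum_eq; intros; ring).
    apply (CV_mult (fun _ => lam)); [|exact HB].
    intros e He. exists O. intros. unfold R_dist. rewrite Rminus_diag, Rabs_R0. lra. }
  destruct (Rseries_CV_comp a (fun i => lam * b i) Hab (exist _ _ HlB)) as [A HA].
  exists A. split; [exact HA|].
  apply Rle_cv_lim with (Un := sum_f_R0 a) (Vn := sum_f_R0 (fun i => lam * b i)); auto.
  intros n. apply sum_Rle. intros. apply Hab.
Qed.

Lemma cover_value_nonneg beta s F t : cover_value beta s F t -> 0 <= t.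
Proof.
  intros [W [_ [_ H]]]. eapply infinite_sum_nonneg; [|exact H].
  intros; apply cover_cost_nonneg.
Qed.

(* Every subset of [0,1) is covered by the generation-0 cylinder [0,1). *)
Lemma cover_value_exists beta s (F : R -> Prop) : (forall x, F x -> 0 <= x < 1) ->
  exists t, cover_value beta s F t.
Proof.
  intros HF.
  set (W := fun i : nat => match i with O => Some (@nil Z) | _ => None end).
  exists (cover_cost beta s (W O)), W. split; [|split].
  - intros i w Hw. destruct i; simpl in Hw; inversion Hw. subst.
    exists 0. split; [lra|]. simpl. intros; lia.
  - intros x Hx. exists O, nil. split; [reflexivity|]. split; [auto|]. simpl; intros; lia.
  - intros e He. exists O. intros n _.
    assert (E : sum_f_R0 (fun i => cover_cost beta s (W i)) n = cover_cost beta s (W O)).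
    { induction n as [|n IH]; [reflexivity|]. simpl. rewrite IH. simpl. ring. }
    rewrite E. unfold R_dist. rewrite Rminus_diag, Rabs_R0. lra.
Qed.

Lemma Ninf_glb beta s (F : R -> Prop) : (forall x, F x -> 0 <= x < 1) ->
  is_glb (cover_value beta s F) (Ninf beta s F).
Proof.
  intros HF. apply glb_exists; [now apply cover_value_exists|apply cover_value_nonneg].
Qed.

Lemma pow_s_scale s l a b : 0 < s -> 0 < l -> a <= l * b ->
  pow_s s a <= Rpower l s * pow_s s b.
Proof.
  intros Hs Hl Hab. unfold pow_s at 1. destruct (Rlt_dec 0 a).
  - assert (Hb : 0 < b) by (destruct (Rlt_dec 0 b); [auto|nra]).
    unfold pow_s. destruct (Rlt_dec 0 b); [|lra].
    rewrite Rpower_mult_distr by lra. apply Rle_Rpower_l; lra.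
  - apply Rmult_le_pos; [left; apply exp_pos|apply pow_s_nonneg].
Qed.

Lemma cyl_app_iff beta v d u :
  cyl_set beta (v ++ d) u <->
  (0 <= u < 1 /\ (forall k, (k < length v)%nat -> digit beta k u = nth k v 0%Z) /\
   cyl_set beta d (fiter beta (length v) u)).
Proof.
  split.
  - intros [Hu Hd]. split; [exact Hu|]. split.
    + intros k Hk. rewrite Hd by (rewrite length_app; lia). apply app_nth1, Hk.
    + split; [now apply fiter_range|].
      intros k Hk. rewrite digit_shift, Hd by (rewrite length_app; lia).
      rewrite app_nth2 by lia. f_equal. lia.
  - intros [Hu [Hv [_ Hd]]]. split; [exact Hu|]. intros k Hk. rewrite length_app in Hk.
    destruct (Nat.lt_ge_cases k (length v)).
    + rewrite app_nth1 by assumption. apply Hv; assumption.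
    + rewrite app_nth2 by assumption. rewrite <- Hd by lia.
      rewrite digit_shift. f_equal. lia.
Qed.

(* Since f^|v| is affine of slope beta^|v| on [v ++ d], |[v ++ d]| <= beta^-|v| |[d]|. *)
Lemma diam_app beta v d : 1 < beta -> is_cyl_word beta (v ++ d) ->
  diam (cyl_set beta (v ++ d)) <= / beta ^ length v * diam (cyl_set beta d).
Proof.
  intros Hb [u0 Hu0].
  assert (HP : 0 < beta ^ length v) by (apply pow_lt; lra).
  apply diam_le; [eauto|apply cyl_range|].
  intros x y Hx Hy.
  apply cyl_app_iff in Hx as [_ [Hx1 Hx2]]. apply cyl_app_iff in Hy as [_ [Hy1 Hy2]].
  assert (E : fiter beta (length v) x - fiter beta (length v) y = beta ^ length v * (x - y))
    by (apply fiter_diff; intros k Hk; rewrite Hx1, Hy1; auto).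
  pose proof (diam_ge _ _ _ (cyl_range beta d) Hx2 Hy2) as Hd.
  rewrite E, Rabs_mult, (Rabs_right (beta ^ length v)) in Hd by lra.
  apply (Rmult_le_reg_l (beta ^ length v)); [exact HP|].
  rewrite <- Rmult_assoc, Rinv_r, Rmult_1_l by lra. exact Hd.
Qed.

Definition pullback_cover (beta : R) (v : list Z) (W : nat -> option (list Z))
  (i : nat) : option (list Z) :=
  match W i with
  | None => None
  | Some d => if excluded_middle_informative (is_cyl_word beta (v ++ d))
              then Some (v ++ d) else None
  end.

Lemma pullback_cost beta s v W i : 1 < beta -> 0 < s ->
  0 <= cover_cost beta s (pullback_cover beta v W i)
    <= Rpower (/ beta ^ length v) s * cover_cost beta s (W i).
Proof.
  intros Hb Hs. split; [apply cover_cost_nonneg|].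
  assert (HP : 0 < beta ^ length v) by (apply pow_lt; lra).
  unfold pullback_cover. destruct (W i) as [d|]; simpl; [|lra].
  destruct excluded_middle_informative as [Hc|Hc]; simpl.
  - apply pow_s_scale; [exact Hs|now apply Rinv_0_lt_compat|now apply diam_app].
  - apply Rmult_le_pos; [left; apply exp_pos|apply pow_s_nonneg].
Qed.

Lemma cover_transform beta s v (F F' : R -> Prop) b : 1 < beta -> 0 < s ->
  (forall x, F' x -> 0 <= x < 1 /\ (forall k, (k < length v)%nat -> digit beta k x = nth k v 0%Z)
        /\ F (fiter beta (length v) x)) ->
  cover_value beta s F b ->
  exists a, cover_value beta s F' a /\ a <= Rpower (/ beta ^ length v) s * b.
Proof.
  intros Hb Hs HF' [W [HW1 [HW2 HW3]]].
  destruct (series_le_scaled (fun i => cover_cost beta s (pullback_cover beta v W i))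
              (fun i => cover_cost beta s (W i)) (Rpower (/ beta ^ length v) s) b
              ltac:(left; apply exp_pos) (fun i => pullback_cost beta s v W i Hb Hs) HW3)
    as [a [Ha Hab]].
  exists a. split; [|exact Hab].
  exists (pullback_cover beta v W). split; [|split; [|exact Ha]].
  - intros i w Hw. unfold pullback_cover in Hw. destruct (W i); [|discriminate].
    destruct excluded_middle_informative; inversion Hw; subst; assumption.
  - intros x Hx. destruct (HF' x Hx) as [Hx0 [Hxv HxF]].
    destruct (HW2 _ HxF) as [i [d [Hi Hcd]]].
    assert (Hc : cyl_set beta (v ++ d) x) by (apply cyl_app_iff; auto).
    exists i, (v ++ d). split; [|exact Hc].
    unfold pullback_cover. rewrite Hi.
    destruct excluded_middle_informative as [_|Hn]; [reflexivity|].
    exfalso. apply Hn. exists x. exact Hc.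
Qed.

Lemma Ninf_transform beta s v (F F' : R -> Prop) : 1 < beta -> 0 < s ->
  (forall x, F x -> 0 <= x < 1) ->
  (forall x, F' x -> 0 <= x < 1 /\ (forall k, (k < length v)%nat -> digit beta k x = nth k v 0%Z)
        /\ F (fiter beta (length v) x)) ->
  Ninf beta s F' <= Rpower (/ beta ^ length v) s * Ninf beta s F.
Proof.
  intros Hb Hs HF HF'.
  destruct (Ninf_glb beta s F HF) as [_ Hgreatest].
  destruct (Ninf_glb beta s F' (fun x Hx => proj1 (HF' x Hx))) as [Hlower _].
  set (lam := Rpower (/ beta ^ length v) s).
  assert (Hlam : 0 < lam) by apply exp_pos.
  assert (H : Ninf beta s F' / lam <= Ninf beta s F).
  { apply Hgreatest. intros b Hbv.
    destruct (cover_transform beta s v F F' b Hb Hs HF' Hbv) as [a [Ha Hal]].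
    apply Hlower in Ha. apply (Rmult_le_reg_l lam); [exact Hlam|].
    unfold Rdiv. rewrite Rmult_comm, Rmult_assoc, Rinv_l, Rmult_1_r by lra.
    fold lam in Hal. lra. }
  apply (Rmult_le_compat_l lam) in H; [|lra].
  unfold Rdiv in H. rewrite Rmult_comm, Rmult_assoc, Rinv_l, Rmult_1_r in H by lra.
  exact H.
Qed.

Lemma count_shift (g : nat -> bool) N a L :
  length (filter (fun i => g (N + i)%nat) (seq a L)) = length (filter g (seq (N + a) L)).
Proof.
  revert a. induction L as [|L IH]; intros a; [reflexivity|].
  simpl. rewrite <- Nat.add_succ_r.
  destruct (g (N + a)%nat); simpl; rewrite IH; reflexivity.
Qed.

Lemma count_split (g : nat -> bool) a L1 L2 :
  length (filter g (seq a (L1 + L2))) =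
  (length (filter g (seq a L1)) + length (filter g (seq (a + L1) L2)))%nat.
Proof. rewrite seq_app, filter_app, length_app. reflexivity. Qed.

Lemma count_le (g : nat -> bool) a L : (length (filter g (seq a L)) <= L)%nat.
Proof. rewrite <- (length_seq L a) at 2. apply filter_length_le. Qed.

Lemma occurs_shift beta x w N i :
  occurs_at beta (fiter beta N x) w i = occurs_at beta x w (N + i).
Proof.
  unfold occurs_at. f_equal. apply functional_extensionality. intros j.
  rewrite digit_shift, Nat.add_assoc. reflexivity.
Qed.

Lemma tau_shift_bounds beta w x N M :
  (tau beta w (fiter beta N x) M <= tau beta w x M + N)%nat /\
  (tau beta w x M <= tau beta w (fiter beta N x) M + N)%nat.
Proof.
  unfold tau. set (L := (M - length w)%nat). set (g := occurs_at beta x w).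
  assert (E : filter (occurs_at beta (fiter beta N x) w) (seq 0 L) =
              filter (fun i => g (N + i)%nat) (seq 0 L))
    by (apply filter_ext; intros i; apply occurs_shift).
  rewrite E.
  rewrite count_shift, Nat.add_0_r.
  pose proof (count_split g 0 N L) as H1. pose proof (count_split g 0 L N) as H2.
  rewrite Nat.add_comm in H2. rewrite H1 in H2.
  pose proof (count_le g 0 N). pose proof (count_le g L N).
  simpl in *. lia.
Qed.

Lemma Gset_shift beta m pbar M eps N x :
  (m < M)%nat -> INR N / (INR M - INR m) < eps / 2 ->
  Gset beta m pbar M (eps / 2) x -> Gset beta m pbar M eps (fiter beta N x).
Proof.
  intros HmM HN [Hx HG]. split; [now apply fiter_range|].
  intros w Hw. specialize (HG w Hw).
  destruct (tau_shift_bounds beta w x N M) as [B1 B2].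
  apply le_INR in B1. apply le_INR in B2. rewrite plus_INR in B1, B2.
  assert (HD : 0 < INR M - INR m) by (apply lt_INR in HmM; lra).
  set (D := INR M - INR m) in *.
  set (a := INR (tau beta w x M)) in *. set (b := INR (tau beta w (fiter beta N x) M)) in *.
  assert (Hdiv : forall u u', u <= u' + INR N -> u / D <= u' / D + INR N / D).
  { intros u u' Hu. unfold Rdiv. rewrite <- Rmult_plus_distr_r.
    apply Rmult_le_compat_r; [left; apply Rinv_0_lt_compat; lra|lra]. }
  pose proof (Hdiv b a B1). pose proof (Hdiv a b B2). lra.
Qed.

Lemma Rpower_base_lt1 u a b : 0 < u < 1 -> a <= b -> Rpower u b <= Rpower u a.
Proof.
  intros Hu Hab. unfold Rpower.
  assert (ln u < 0) by (rewrite <- ln_1; apply ln_increasing; lra).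
  destruct (Req_dec a b) as [->|]; [lra|]. left. apply exp_increasing. nra.
Qed.

(* Q(s,beta) = beta^-s / (1 - r) with r = (1 - 1/beta)^s in [1 - 1/beta, 1); since
   beta < 2 this gives beta^s <= beta <= 1/(1 - r), so beta^s <= 2 Q. *)
Lemma Q_bound s beta : 0 < s <= 1 -> 1 < beta < 2 ->
  0 < Qsb s beta /\ Rpower beta s <= 2 * Qsb s beta.
Proof.
  intros Hs Hb.
  set (u := 1 - / beta).
  assert (Hib : / 2 < / beta < 1)
    by (split; [|rewrite <- Rinv_1]; apply Rinv_lt_contravar; lra).
  assert (Hu : 0 < u < 1) by (unfold u; lra).
  set (r := Rpower u s).
  assert (Hr : u <= r < 1).
  { split.
    - unfold r. rewrite <- (Rpower_1 u) at 1 by lra. apply Rpower_base_lt1; lra.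
    - unfold r. rewrite <- (Rpower_O u) by lra. unfold Rpower. apply exp_increasing.
      assert (ln u < 0) by (rewrite <- ln_1; apply ln_increasing; lra). nra. }
  assert (HS : infinite_sum (fun i => Rpower u (INR i * s)) (/ (1 - r))).
  { pose proof (GP_infinite r ltac:(rewrite Rabs_right; lra)) as H. unfold Pser in H.
    replace (fun i => Rpower u (INR i * s)) with (fun n : nat => 1 * r ^ n); [exact H|].
    apply functional_extensionality. intros i. unfold r.
    rewrite <- Rpower_pow by apply exp_pos.
    rewrite Rpower_mult, Rmult_1_l. f_equal. ring. }
  assert (ES : epsilon (inhabits 0)
                 (fun l => infinite_sum (fun i => Rpower (1 - / beta) (INR i * s)) l)
               = / (1 - r)).
  { apply (uniqueness_sum (fun i => Rpower u (INR i * s))); [|exact HS].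
    apply (epsilon_spec (inhabits 0)
             (fun l => infinite_sum (fun i => Rpower u (INR i * s)) l)).
    eauto. }
  unfold Qsb. rewrite ES, Rpower_Ropp.
  assert (Hge : beta <= / (1 - r)).
  { replace beta with (/ (1 - u)) by (unfold u; field; lra).
    apply Rinv_le_contravar; lra. }
  assert (Hps : 0 < Rpower beta s) by apply exp_pos.
  assert (Hpb : Rpower beta s <= beta)
    by (rewrite <- (Rpower_1 beta) at 2 by lra; apply Rle_Rpower; lra).
  split.
  - apply Rmult_lt_0_compat; [now apply Rinv_0_lt_compat|lra].
  - apply (Rmult_le_reg_l (Rpower beta s)); [exact Hps|].
    replace (Rpower beta s * (2 * (/ Rpower beta s * / (1 - r)))) with (2 * / (1 - r))
      by (field; lra).
    nra.
Qed.

Definition prefix_word (beta : R) (N : nat) (x : R) : list Z :=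
  map (fun j => digit beta j x) (seq 0 N).

Lemma prefix_word_spec beta N x :
  length (prefix_word beta N x) = N /\
  forall k, (k < N)%nat -> nth k (prefix_word beta N x) 0%Z = digit beta k x.
Proof.
  unfold prefix_word. split; [now rewrite length_map, length_seq|].
  intros k Hk. rewrite (nth_indep _ _ (digit beta 0 x)) by (now rewrite length_map, length_seq).
  rewrite (map_nth (fun j => digit beta j x)), seq_nth by assumption. reflexivity.
Qed.

Lemma strictly_increasing_ge (M : nat -> nat) :
  (forall k, (M k < M (S k))%nat) -> forall k, (k <= M k)%nat.
Proof. intros HM k. induction k as [|k IH]; [lia|]. specialize (HM k). lia. Qed.

Lemma eventually_shift_small m N eps (M : nat -> nat) : 0 < eps ->
  (forall k, (M k < M (S k))%nat) ->
  exists K, forall k, (K < k)%nat ->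
    (m < M k)%nat /\ INR N / (INR (M k) - INR m) < eps / 2.
Proof.
  intros Heps HM.
  assert (HNe : 0 <= 2 * INR N / eps)
    by (apply Rmult_le_pos; [pose proof (pos_INR N); lra|left; now apply Rinv_0_lt_compat]).
  destruct (INR_archimed 1 (INR m + 2 * INR N / eps) ltac:(lra)) as [K HK].
  rewrite Rmult_1_r in HK.
  exists K. intros k Hk.
  pose proof (strictly_increasing_ge M HM k).
  assert (HMk : INR m + 2 * INR N / eps < INR (M k))
    by (assert (INR K < INR (M k)) by (apply lt_INR; lia); lra).
  split; [apply INR_lt; lra|].
  apply (Rmult_lt_reg_r (INR (M k) - INR m)); [lra|].
  unfold Rdiv at 1. rewrite Rmult_assoc, Rinv_l, Rmult_1_r by lra.
  replace (INR N) with (eps / 2 * (2 * INR N / eps)) at 1 by (field; lra).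
  apply Rmult_lt_compat_l; lra.
Qed.

Lemma final_estimate s beta N c a d Q : 0 < s -> 1 < beta -> 0 <= c -> 0 < Q ->
  Rpower beta s <= 2 * Q -> / beta ^ S N <= d -> a < c / (2 * Q) ->
  Rpower (/ beta ^ N) s * a < c * pow_s s d.
Proof.
  intros Hs Hb Hc HQ HQb Hd Ha.
  assert (HbN : 0 < beta ^ N) by (apply pow_lt; lra).
  assert (Hlam : 0 < Rpower (/ beta ^ N) s) by apply exp_pos.
  assert (Hps : 0 < Rpower beta s) by apply exp_pos.
  assert (HSN : 0 < / beta ^ S N) by (apply Rinv_0_lt_compat, pow_lt; lra).
  assert (Hsplit : Rpower (/ beta ^ S N) s = Rpower (/ beta ^ N) s / Rpower beta s).
  { simpl. rewrite Rinv_mult, Rmult_comm.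
    rewrite <- Rpower_mult_distr by (apply Rinv_0_lt_compat; lra).
    unfold Rdiv. f_equal. rewrite <- Rpower_Ropp. unfold Rpower.
    rewrite ln_Rinv by lra. f_equal. ring. }
  assert (Hds : Rpower (/ beta ^ S N) s <= pow_s s d).
  { unfold pow_s. destruct (Rlt_dec 0 d); [|lra]. apply Rle_Rpower_l; lra. }
  assert (HcQ : c / (2 * Q) <= c / Rpower beta s)
    by (apply Rmult_le_compat_l; [lra|apply Rinv_le_contravar; lra]).
  apply Rlt_le_trans with (Rpower (/ beta ^ N) s * (c / Rpower beta s)).
  - apply Rmult_lt_compat_l; lra.
  - replace (Rpower (/ beta ^ N) s * (c / Rpower beta s))
      with (c * Rpower (/ beta ^ S N) s) by (rewrite Hsplit; field; lra).
    apply Rmult_le_compat_l; lra.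
Qed.

Theorem mainTheorem15
  (s beta : R) (m : nat) (pbar : list Z -> R) (eps c : R) (M : nat -> nat)
  (Hs : 0 < s <= 1)
  (Hbeta : 1 < beta < 2)
  (Hterm : expansion_of_one_terminates beta)
  (Hpbar : forall w, binary_word m w -> 0 <= pbar w <= 1)
  (Heps : 0 < eps)
  (HM : forall k, (M k < M (S k))%nat)
  (Hc : 0 <= c < 1)
  (HN : forall k, (m < M k)%nat ->
     Ninf beta s (fun x => (0 <= x < 1) /\ Gset beta m pbar (M k) eps x)
       < c / (2 * Qsb s beta)) :
  forall C : R -> Prop, is_cylinder beta C ->
    exists KC : nat, forall k : nat, (KC < k)%nat ->
      Ninf beta s (fun x => C x /\ Gset beta m pbar (M k) (eps / 2) x)
        < c * pow_s s (diam C).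
Proof.
  intros C [w [Hw HC]].
  replace C with (cyl_set beta w)
    by (apply functional_extensionality; intros x; apply propositional_extensionality;
        symmetry; apply HC).
  destruct (cylinder_depth beta w ltac:(lra) Hw) as [N [xa [Hxa [Hshare Hdiam]]]].
  destruct (eventually_shift_small m N eps M Heps HM) as [K HK].
  exists K. intros k Hk. destruct (HK k Hk) as [HmM Hshift].
  destruct (prefix_word_spec beta N xa) as [Hlen Hnth].
  assert (Hpull :
    Ninf beta s (fun x => cyl_set beta w x /\ Gset beta m pbar (M k) (eps / 2) x)
      <= Rpower (/ beta ^ N) s *
         Ninf beta s (fun x => (0 <= x < 1) /\ Gset beta m pbar (M k) eps x)).
  { rewrite <- Hlen. apply Ninf_transform; [lra|lra|now intros x []|].
    intros x [Hx HG]. rewrite Hlen. split; [exact (cyl_range _ _ _ Hx)|]. split.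
    - intros j Hj. rewrite Hnth by assumption. exact (Hshare x Hx j Hj).
    - split; [apply fiter_range, (cyl_range _ _ _ Hx)|]. now apply Gset_shift. }
  apply (Rle_lt_trans _ _ _ Hpull).
  destruct (Q_bound s beta Hs Hbeta) as [HQ0 HQ].
  apply (final_estimate s beta N c _ _ (Qsb s beta)); try lra.
  now apply HN.
Qed.
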